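(* Let $X$ be a subshift over a finite alphabet such that (i) there is $N$ such that every right special factor $w$ of $\mathcal{L}(X)$ with $|w|\ge N$ admits a letter $c$ such that $wc$ is right special in $\mathcal{L}(X)$; and (ii) right special words are dense in $X$: for every $\mathbf{x}\in X$ and every $n$, some right special factor of $\mathcal{L}(X)$ has $\mathbf{x}[0,n-1]$ as a prefix. Then the winning shift $W(X)$ has infinite coding dimension.
   Context: Subshifts are one-sided closed shift-invariant subsets of $A^{\mathbb{N}}$; $\mathcal{L}(X)$ is the set of finite factors of elements of $X$. A word $w\in\mathcal{L}(X)$ is right special if $wa,wb\in\mathcal{L}(X)$ for two distinct letters $a,b$. Winning shift: for a choice sequence $\alpha=\alpha_0\alpha_1\cdots\in\{0,\dots,|A|-1\}^{\mathbb{N}}$, Alice and Bob play infinitely many rounds; in round $j$ Alice chooses $A_j\subseteq A$ with $|A_j|=\alpha_j+1$ and Bob chooses $a_j\in A_j$; Alice wins if $a_0a_1\cdots\in X$. $W(X)$ is the set of $\alpha$ for which Alice has a winning strategy. Infinite coding dimension: there is no $d$ with $\sum_i y_i\le d$ for all $\mathbf{y}\in W(X)$. *)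

From mathcomp Require Import all_boot.
Set Implicit Arguments. Unset Strict Implicit. Unset Printing Implicit Defensive.

Section Defs.
Variable A : finType.

Definition sequence := nat -> A.

Definition pref (x : sequence) (n : nat) : seq A := [seq x k | k <- iota 0 n].

Definition shift (x : sequence) : sequence := fun n => x n.+1.

(* X is closed in the product topology of A^N (A discrete):
   any sequence all of whose prefixes are prefixes of points of X lies in X *)
Definition seq_closed (X : sequence -> Prop) : Prop :=
  forall x, (forall n, exists y, X y /\ pref y n = pref x n) -> X x.

Definition subshift (X : sequence -> Prop) : Prop :=
  [/\ exists x, X x, seq_closed X & forall x, X x -> X (shift x)].

Definition in_lang (X : sequence -> Prop) (w : seq A) : Prop :=
  exists x i, X x /\ w = [seq x (i + k) | k <- iota 0 (size w)].

Definition right_special (X : sequence -> Prop) (w : seq A) : Prop :=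
  exists a b : A, a != b /\ in_lang X (rcons w a) /\ in_lang X (rcons w b).

(* Alice's strategies: given Bob's previous choices a_0 .. a_{j-1}, a set A_j *)
Definition strategy := seq A -> {set A}.

Definition legal_strategy (alpha : nat -> nat) (S : strategy) : Prop :=
  forall h : seq A, #|S h| = (alpha (size h)).+1.

Definition winning_strategy (X : sequence -> Prop) (S : strategy) : Prop :=
  forall a : sequence, (forall j, a j \in S (pref a j)) -> X a.

Definition winning_shift (X : sequence -> Prop) (alpha : nat -> nat) : Prop :=
  (forall j, alpha j < #|A|) /\
  exists S : strategy, legal_strategy alpha S /\ winning_strategy X S.

(* infinite coding dimension: there is no d with sum_i y_i <= d for all y in W(X);
   for nat-valued y, sum_i y_i <= d iff all partial sums are <= d *)
Definition infinite_coding_dimension (X : sequence -> Prop) : Prop :=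
  ~ exists d : nat, forall y, winning_shift X y ->
      forall n, \sum_(i < n) y i <= d.

End Defs.

From mathcomp Require Import all_boot.
From Stdlib Require Import ClassicalEpsilon Lia.
From mathcomp Require Import zify.

Set Implicit Arguments. Unset Strict Implicit. Unset Printing Implicit Defensive.

(* Alice keeps the current play extendable to a right special
   word of a prescribed length.  By density (ii) every word of L(X) has an
   extension to a right special word of length at least N, and by (i) such a
   word extends to right special words of every larger length; since A is
   finite, for each n there is a single threshold M n beyond which every word
   of length n in L(X) has right special extensions of every length.
   Setting t_0 = M 0 and t_{k+1} = t_k + 1 + M (t_k + 1), Alice plays the
   singleton "next letter of the planned extension" at every step except at
   the branching times t_k, where the planned word is itself right special
   and she offers two letters, both of which again admit a planned extension
   up to t_{k+1}.  Every play then has all its prefixes in L(X), hence lies in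
   X by closedness; so the sequence with a 1 exactly at the times t_k lies in
   W(X), and its partial sums are unbounded. *)

Section Prefixes.
Variable A : finType.
Implicit Types (x : sequence A) (n m : nat).

Lemma size_pref x n : size (pref x n) = n.
Proof. by rewrite /pref size_map size_iota. Qed.

Lemma pref_add x n m : pref x (n + m) = pref x n ++ [seq x k | k <- iota n m].
Proof. by rewrite /pref iotaD map_cat. Qed.

Lemma pref_S x n : pref x n.+1 = rcons (pref x n) (x n).
Proof. by rewrite -addn1 pref_add cats1. Qed.

Lemma iter_shift x i k : iter i (@shift A) x k = x (i + k).
Proof. by elim: i k => [|i IH] k //=; rewrite /shift IH addSnnS. Qed.

End Prefixes.

Section Language.
Variables (A : finType) (X : sequence A -> Prop).
Hypothesis sX : subshift X.

Lemma in_lang_pref w : in_lang X w <-> exists y, X y /\ pref y (size w) = w.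
Proof.
have [_ _ shiftX] := sX; split; last by case=> y [Xy py]; exists y, 0.
case=> x [i [Xx ->]]; exists (iter i (@shift A) x); split.
  by elim: i => //= i IH; apply: shiftX.
by rewrite size_map size_iota; apply: eq_map => k; apply: iter_shift.
Qed.

Lemma lang_nil : in_lang X [::].
Proof. by have [[x Xx] _ _] := sX; exists x, 0. Qed.

Lemma lang_prefix h v : in_lang X (h ++ v) -> in_lang X h.
Proof.
case/in_lang_pref=> y [Xy py]; apply/in_lang_pref; exists y; split=> //.
move: py; rewrite size_cat pref_add => /eqP; rewrite eqseq_cat ?size_pref //.
by case/andP=> /eqP.
Qed.

Lemma rs_lang w : right_special X w -> in_lang X w.
Proof. by case=> a [b [_ [wa _]]]; apply: (@lang_prefix w [:: a]); rewrite cats1. Qed.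

Lemma closed_by_lang x : (forall n, in_lang X (pref x n)) -> X x.
Proof.
move=> lang_x; have [_ closedX _] := sX; apply: closedX => n.
have [y [Xy py]] := (in_lang_pref _).1 (lang_x n).
by exists y; rewrite size_pref in py.
Qed.

End Language.

Definition extends_beyond (A : finType) (X : sequence A -> Prop) (h : seq A) m :=
  forall m', m <= m' -> exists v, size v = m' /\ right_special X (h ++ v).

Lemma extends_beyond_mono (A : finType) (X : sequence A -> Prop) h m m' :
  m <= m' -> extends_beyond X h m -> extends_beyond X h m'.
Proof. by move=> le_mm' ext k le_m'k; apply: ext; apply: leq_trans le_m'k. Qed.

Lemma uniform_threshold (T : finType) (P : T -> nat -> Prop) :
  (forall x m m', m <= m' -> P x m -> P x m') -> (forall x, exists m, P x m) ->
  exists m, forall x, P x m.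
Proof.
move=> up /choice [f Pf]; exists (\max_x f x) => x.
exact: up x _ _ (leq_bigmax x) (Pf x).
Qed.

Section Extension.
Variables (A : finType) (X : sequence A -> Prop) (N : nat).
Hypothesis sX : subshift X.
Hypothesis extN : forall w : seq A, right_special X w -> N <= size w ->
  exists c : A, right_special X (rcons w c).
Hypothesis dense : forall x : sequence A, X x -> forall n : nat,
  exists w : seq A, right_special X w /\ exists u, w = pref x n ++ u.

Lemma rs_extend w : right_special X w -> N <= size w ->
  forall m, exists v, size v = m /\ right_special X (w ++ v).
Proof.
move=> rs_w N_w; elim=> [|m [v [sv rs_wv]]]; first by exists [::]; rewrite cats0.
have [|c rs_wvc] := extN rs_wv; first by rewrite size_cat; apply: leq_trans (leq_addr _ _).
by exists (rcons v c); rewrite size_rcons sv -rcons_cat.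
Qed.

(* Density (ii) brings every factor to a long right special word. *)
Lemma lang_extends h : in_lang X h -> exists m, extends_beyond X h m.
Proof.
case/(in_lang_pref sX)=> y [Xy py].
have [w [rs_w [u ew]]] := dense Xy (size h + N).
have N_w : N <= size w by rewrite ew size_cat size_pref; lia.
have [r er] : exists r, w = h ++ r.
  by exists ([seq y k | k <- iota (size h) N] ++ u); rewrite ew pref_add py -catA.
rewrite er in rs_w N_w; exists (size r) => m le_rm.
have [v [sv rs_hrv]] := rs_extend rs_w N_w (m - size r).
by exists (r ++ v); rewrite size_cat sv subnKC // catA.
Qed.

Lemma rs_extension_bound : exists M : nat -> nat,
  forall h, in_lang X h -> extends_beyond X h (M (size h)).
Proof.
have /choice [M HM] : forall n, exists m,
    forall h, size h = n -> in_lang X h -> extends_beyond X h m.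
  move=> n; have [|w|m Hm] :=
    @uniform_threshold (n.-tuple A)
      (fun w m => in_lang X w -> extends_beyond X w m).
  - by move=> w m m' le_mm' ext /ext; apply: extends_beyond_mono.
  - case: (classic (in_lang X w)) => [/lang_extends [m ext]|not_lang].
      by exists m.
    by exists 0 => /not_lang.
  - by exists m => h sh; apply: (Hm (Tuple (introT eqP sh))).
by exists M => h; apply: HM.
Qed.

End Extension.

Lemma exists_set_of_card (T : finType) k : k <= #|T| -> exists S : {set T}, #|S| = k.
Proof.
elim: k => [|k IH] lt_kT; first by exists set0; rewrite cards0.
have [S cS] := IH (ltnW lt_kT).
have /card_gt0P [x] : 0 < #|~: S| by rewrite -(ltn_add2l #|S|) addn0 cardsC cS.
rewrite in_setC => x_notin_S.
by exists (x |: S); rewrite cardsU1 x_notin_S cS.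
Qed.

Lemma winning_by_invariant (A : finType) (X : sequence A -> Prop)
    (alpha : nat -> nat) (Good : seq A -> Prop) :
  subshift X -> (forall j, alpha j < #|A|) -> Good [::] ->
  (forall h, Good h -> exists S : {set A},
     #|S| = (alpha (size h)).+1 /\ forall c, c \in S -> Good (rcons h c)) ->
  (forall h, Good h -> in_lang X h) ->
  winning_shift X alpha.
Proof.
move=> sX alpha_lt good_nil good_step good_lang; split=> //.
have /choice [S HS] : forall h, exists S : {set A}, #|S| = (alpha (size h)).+1 /\
    (Good h -> forall c, c \in S -> Good (rcons h c)).
  move=> h; case: (classic (Good h)) => [/good_step [S [cS HS]]|bad].
    by exists S.
  have [S cS] := exists_set_of_card (alpha_lt (size h)).
  by exists S; split=> // /bad.
exists S; split=> [h|a play]; first by case: (HS h).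
have good_pref j : Good (pref a j).
  by elim: j => [|j IH] //; rewrite pref_S; apply: (HS _).2 IH _ (play j).
by apply: (closed_by_lang sX) => n; apply: good_lang.
Qed.

Lemma partial_sum_mono (f : nat -> nat) m n :
  m <= n -> \sum_(i < m) f i <= \sum_(i < n) f i.
Proof.
move=> le_mn; rewrite -!(big_mkord xpredT).
by rewrite [X in _ <= X](@big_cat_nat _ _ _ m) //= leq_addr.
Qed.

Section BranchingTimes.
Variable t : nat -> nat.
Hypothesis t_incr : forall k, t k < t k.+1.

Lemma times_leE : {mono t : i j / i <= j}.
Proof. by apply: leq_mono; apply: homo_ltn t_incr; apply: ltn_trans. Qed.

Lemma le_times k : k <= t k.
Proof. by elim: k => // k IH; apply: leq_ltn_trans IH (t_incr k). Qed.

Definition is_time (j : nat) : bool := j \in [seq t k | k <- iota 0 j.+1].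

Lemma is_timeP j : reflect (exists k, j = t k) (is_time j).
Proof.
apply: (iffP mapP) => [[k _ ->]|[k ->]]; first by exists k.
by exists k; rewrite // mem_iota ltnS le_times.
Qed.

Lemma count_times k : k < \sum_(i < (t k).+1) is_time i.
Proof.
have time_t j : is_time (t j) by apply/is_timeP; exists j.
elim: k => [|k IH]; rewrite big_ord_recr /= time_t addn1 ltnS //.
exact: leq_trans IH (partial_sum_mono (fun i => nat_of_bool (is_time i)) (t_incr k)).
Qed.

End BranchingTimes.

Section Strategy.
Variables (A : finType) (X : sequence A -> Prop) (M : nat -> nat).
Hypothesis sX : subshift X.
Hypothesis extM : forall h, in_lang X h -> extends_beyond X h (M (size h)).

(* The branching times: after branching at t_k, the new letter leaves a word
   of length t_k + 1, which extends to a right special word M (t_k + 1)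
   letters later. *)
Fixpoint times (k : nat) : nat :=
  if k is k'.+1 then times k' + 1 + M (times k' + 1) else M 0.

Lemma times_incr k : times k < times k.+1.
Proof. by rewrite /=; lia. Qed.

Definition first_branch (n k : nat) : Prop :=
  n <= times k /\ forall i, i < k -> times i < n.

Definition on_track (h : seq A) : Prop :=
  exists k v, first_branch (size h) k /\
    size (h ++ v) = times k /\ right_special X (h ++ v).

Lemma on_track_nil : on_track [::].
Proof.
have [v [sv rs_v]] := extM (lang_nil sX) (leqnn _).
by exists 0, v; split.
Qed.

Lemma on_track_lang h : on_track h -> in_lang X h.
Proof. by case=> k [v [_ [_ /(rs_lang sX)]]]; apply: lang_prefix. Qed.

Lemma on_track_after_branch h k c :
  size h = times k -> in_lang X (rcons h c) -> on_track (rcons h c).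
Proof.
move=> sh lang_hc; have shc : size (rcons h c) = times k + 1 by rewrite size_rcons sh addn1.
have [v [sv rs_hcv]] := extM lang_hc (leqnn _).
exists k.+1, v; split; last by rewrite size_cat sv shc.
split=> [|i]; first by rewrite shc /=; apply: leq_addr.
by rewrite shc addn1 ltnS ltnS (times_leE times_incr).
Qed.

(* At a branching time the planned word is the history itself, which is
   right special: two letters keep the invariant. *)
Lemma on_track_branch h k : on_track h -> size h = times k ->
  exists a b, a != b /\ on_track (rcons h a) /\ on_track (rcons h b).
Proof.
case=> k' [v [[le_hk' lt_k'] [shv rs_hv]]] sh.
have ek : k' = k.
  apply/eqP; rewrite eqn_leq andbC -(times_leE times_incr) -sh le_hk' leqNgt.
  by apply/negP => /lt_k'; rewrite sh ltnn.
subst k'; have ev : v = [::].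
  by apply/nilP; move: shv; rewrite size_cat sh -{2}[times k]addn0 => /addnI/eqP.
rewrite ev cats0 in rs_hv; case: rs_hv => a [b [ab [lang_ha lang_hb]]].
by exists a, b; split=> //; split; apply: on_track_after_branch sh _.
Qed.

Lemma on_track_continue h : on_track h -> (forall k, size h != times k) ->
  exists c, on_track (rcons h c).
Proof.
case=> k [v [[le_hk lt_k] [shv rs_hv]]] not_time.
case: v shv rs_hv => [|c v] shv rs_hv; first by move: (not_time k); rewrite -shv cats0 eqxx.
exists c, k, v; rewrite -cats1 -catA; split=> //; rewrite size_cat addn1; split.
  by rewrite ltn_neqAle not_time.
by move=> i /lt_k; apply: ltnW.
Qed.

End Strategy.

Theorem mainTheorem7 (A : finType) (X : sequence A -> Prop) :
  subshift X ->
  (exists N : nat, forall w : seq A, right_special X w -> N <= size w ->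
      exists c : A, right_special X (rcons w c)) ->
  (forall x : sequence A, X x -> forall n : nat,
      exists w : seq A, right_special X w /\ exists u, w = pref x n ++ u) ->
  infinite_coding_dimension X.
Proof.
move=> sX [N extN] dense.
have [M extM] := rs_extension_bound sX extN dense.
have two_letters : 1 < #|A|.
  have [[x Xx] _ _] := sX; have [w [[a [b [ab _]]] _]] := dense x Xx 0.
  by apply/card_gt1P; exists a, b.
pose alpha j := nat_of_bool (is_time (times M) j).
have win : winning_shift X alpha.
  apply: (winning_by_invariant (Good := on_track X M)) => //.
  - by move=> j; apply: leq_ltn_trans two_letters; apply: leq_b1.
  - exact: on_track_nil.
  - move=> h good; rewrite /alpha; case: is_timeP => [|[k sh]|not_time].
    + exact: times_incr.
    + have [a [b [ab [good_a good_b]]]] := on_track_branch extM good sh.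
      by exists [set a; b]; rewrite cards2 ab; split=> // c /set2P [] ->.
    + have [|c good_c] := on_track_continue good.
        by move=> k; apply/eqP => sh; apply: not_time; exists k.
      by exists [set c]; rewrite cards1; split=> // e /set1P ->.
  - exact: on_track_lang.
case=> d bound; have := bound alpha win (times M d).+1.
by rewrite leqNgt (leq_trans _ (count_times (times_incr M) d)).
Qed.
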